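(* Let $R$ be a commutative ring with identity and let $p_0, p_{11}, p_{12}, p_{21}, p_{22}\in R$ be such that $p_0$ divides $p_{11}p_{22}$, $p_{21}$ divides $p_{11}p_{12}$, and $p_{12}$ divides $p_{21}p_{22}$. Set $p_1=p_{11}+p_{12}$ and $p_2=p_{21}+p_{22}$. Then $$\sqrt{(p_0,p_1,p_2)}=\sqrt{(p_0,p_{11},p_{12},p_{21},p_{22})}.$$
   Context: For an ideal $J$ of $R$, $\sqrt{J}$ denotes its radical; $(a_1,\dots,a_k)$ denotes the ideal generated by $a_1,\dots,a_k$. *)

From HB Require Import structures.
From mathcomp Require Import all_boot all_order all_algebra.
Set Implicit Arguments. Unset Strict Implicit. Unset Printing Implicit Defensive.
Import GRing.Theory.
Local Open Scope ring_scope.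

Definition ideal_gen (R : comPzRingType) (s : seq R) : R -> Prop :=
  fun x => exists c : 'I_(size s) -> R, x = \sum_(i < size s) c i * s`_i.

Definition radical (R : comPzRingType) (J : R -> Prop) : R -> Prop :=
  fun x => exists n : nat, J (x ^+ n).

Definition rdivides (R : comPzRingType) (a b : R) : Prop :=
  exists c : R, b = a * c.

From HB Require Import structures.
From mathcomp Require Import all_boot all_order all_algebra.
From mathcomp Require Import ring.
Set Implicit Arguments.
Unset Strict Implicit.
Unset Printing Implicit Defensive.
Local Open Scope ring_scope.
Import GRing.Theory.

(* Writing p1 = p11 + p12 and p2 = p21 + p22, the divisibility hypotheses give
   p11^3 = c e p0 + p11^2 p1 - c p11 p2 when p0 e = p11 p22 and p21 c = p11 p12,
   so p11 lies in the radical of (p0, p1, p2).  The hypotheses are symmetric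
   under p11 <-> p22, p12 <-> p21, which yields p22 in the same way; then
   p12 = p1 - p11 and p21 = p2 - p22 follow because a radical is an ideal. *)

Record is_ideal (R : comPzRingType) (J : R -> Prop) : Prop := IsIdeal {
  ideal0 : J 0;
  idealD : forall x y, J x -> J y -> J (x + y);
  idealMl : forall r x, J x -> J (r * x)
}.

Section IdealGen.
Variables (R : comPzRingType) (s : seq R).

Lemma ideal_gen_is_ideal : is_ideal (ideal_gen s).
Proof.
split.
- by exists (fun _ => 0); rewrite big1 // => i _; rewrite mul0r.
- move=> _ _ [c ->] [d ->]; exists (fun i => c i + d i).
  by rewrite -big_split /=; apply: eq_bigr => i _; rewrite mulrDl.
- move=> r _ [c ->]; exists (fun i => r * c i).
  by rewrite mulr_sumr; apply: eq_bigr => i _; rewrite mulrA.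
Qed.

Lemma ideal_gen_mem a : a \in s -> ideal_gen s a.
Proof.
rewrite -index_mem => lt_as.
exists (fun i => ((i : nat) == index a s)%:R).
rewrite (bigD1 (Ordinal lt_as)) //= eqxx mul1r nth_index -?index_mem //.
rewrite big1 ?addr0 // => i; rewrite -val_eqE /= => /negbTE ->.
by rewrite mul0r.
Qed.

End IdealGen.

Section Radical.
Variables (R : comPzRingType) (J : R -> Prop).
Hypothesis idJ : is_ideal J.

Lemma mem_radical x : J x -> radical J x.
Proof. by exists 1%N; rewrite expr1. Qed.

Lemma radicalX x n : radical J (x ^+ n) -> radical J x.
Proof. by move=> [m Jm]; exists (n * m)%N; rewrite exprM. Qed.

Lemma radicalMl r x : radical J x -> radical J (r * x).
Proof. by move=> [m Jm]; exists m; rewrite exprMn; apply: idealMl. Qed.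

(* In the binomial expansion of (x + y)^(m + k), each term contains x^m or y^k. *)
Lemma radicalD x y : radical J x -> radical J y -> radical J (x + y).
Proof.
move=> [m Jxm] [k Jyk]; exists (m + k)%N; rewrite exprDn.
apply: (big_ind J (ideal0 idJ) (idealD idJ)) => i _.
rewrite -mulr_natl; apply: (idealMl idJ).
case: (leqP k i) => [le_ki | lt_ik].
  rewrite -(subnKC le_ki) exprD mulrA mulrC.
  by do 2!apply: (idealMl idJ).
rewrite -addnBA; last exact: ltnW.
by rewrite exprD -mulrA mulrC; apply: (idealMl idJ).
Qed.

Lemma radicalB x y : radical J x -> radical J y -> radical J (x - y).
Proof. by move=> Jx Jy; rewrite -mulN1r; apply: radicalD => //; apply: radicalMl. Qed.

Lemma radical_sum n (F : 'I_n -> R) :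
  (forall i, radical J (F i)) -> radical J (\sum_(i < n) F i).
Proof.
move=> JF; apply: big_ind => //; last exact: radicalD.
exact/mem_radical/(ideal0 idJ).
Qed.

Lemma mem_cube_of_dvd p0 p11 p12 p21 p22 :
  rdivides p0 (p11 * p22) -> rdivides p21 (p11 * p12) ->
  J p0 -> J (p11 + p12) -> J (p21 + p22) -> J (p11 ^+ 3).
Proof.
move=> [e He] [c Hc] J0 J1 J2.
(* The last two summands vanish by the divisibility hypotheses. *)
have -> : p11 ^+ 3 = c * e * p0 + p11 * p11 * (p11 + p12)
                     + - (c * p11) * (p21 + p22)
                     + c * (p11 * p22 - p0 * e) + p11 * (p21 * c - p11 * p12).
  by ring.
rewrite He Hc !subrr !mulr0 !addr0.
by do !apply: (idealD idJ); apply: (idealMl idJ).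
Qed.

End Radical.

Lemma radical_ideal_gen_sub (R : comPzRingType) (s t : seq R) :
  (forall a, a \in s -> radical (ideal_gen t) a) ->
  forall x, radical (ideal_gen s) x -> radical (ideal_gen t) x.
Proof.
move=> sub_st x [n [c xn]]; apply: (radicalX (n := n)); rewrite xn.
apply: (radical_sum (ideal_gen_is_ideal t)) => i.
by apply: (radicalMl (ideal_gen_is_ideal t)); apply: sub_st; apply: mem_nth.
Qed.

Theorem proposition1 (R : comPzRingType) (p0 p11 p12 p21 p22 : R) :
  rdivides p0 (p11 * p22) ->
  rdivides p21 (p11 * p12) ->
  rdivides p12 (p21 * p22) ->
  let p1 := p11 + p12 in
  let p2 := p21 + p22 in
  forall x : R,
    radical (ideal_gen [:: p0; p1; p2]) x <->
    radical (ideal_gen [:: p0; p11; p12; p21; p22]) x.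
Proof.
move=> dvd0 dvd21 dvd12 p1 p2 x.
set s := [:: p0; p1; p2]; set t := [:: p0; p11; p12; p21; p22].
have ids := ideal_gen_is_ideal s; have idt := ideal_gen_is_ideal t.
have [s0 s1 s2] : [/\ ideal_gen s p0, ideal_gen s p1 & ideal_gen s p2].
  by split; apply: ideal_gen_mem; rewrite !inE eqxx ?orbT.
have rad_t a : a \in t -> radical (ideal_gen t) a.
  by move/ideal_gen_mem/mem_radical.
have rad11 : radical (ideal_gen s) p11.
  exact/(radicalX (n := 3))/mem_radical/(mem_cube_of_dvd ids dvd0 dvd21 s0 s1 s2).
have rad22 : radical (ideal_gen s) p22.
  apply/(radicalX (n := 3))/mem_radical.
  apply: (@mem_cube_of_dvd _ _ ids p0 p22 p21 p12 p11); rewrite 1?mulrC 1?addrC //.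
split; apply: radical_ideal_gen_sub => a; rewrite !inE.
  case/or3P=> /eqP->; first by apply: rad_t; rewrite inE eqxx.
    by apply: (radicalD idt); apply: rad_t; rewrite !inE eqxx ?orbT.
  by apply: (radicalD idt); apply: rad_t; rewrite !inE eqxx ?orbT.
case/or4P=> [/eqP->|/eqP->|/eqP->|/orP[/eqP->|/eqP->]] //.
- exact/mem_radical.
- by rewrite -[p12](addKr p11) addrC; apply: (radicalB ids) => //; apply: mem_radical.
- by rewrite -[p21](addrK p22); apply: (radicalB ids) => //; apply: mem_radical.
Qed.
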